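(* The bidisc $\mathbb{D}\times\mathbb{D}$ and the domain $\Omega_1=\{(u,v)\in\mathbb{C}^2: |u^2|+|v^2|-1<|u^2+v^2-1|\}$ are biholomorphic.
   Context: $\mathbb{D}$ is the open unit disc in $\mathbb{C}$. *)

From Stdlib Require Import Reals.
From Coquelicot Require Import Coquelicot.
Open Scope R_scope.

Definition unit_disc : C -> Prop := fun z => Cmod z < 1.

Definition bidisc : C * C -> Prop :=
  fun p => unit_disc (fst p) /\ unit_disc (snd p).

Definition Omega1 : C * C -> Prop :=
  fun p => let u := fst p in let v := snd p in
    Cmod (u * u)%C + Cmod (v * v)%C - 1 < Cmod (u * u + v * v - 1)%C.

Definition C2_differentiable_at (F : C * C -> C) (p : C * C) : Prop :=
  exists a b : C, forall eps : R, 0 < eps -> exists delta : R, 0 < delta /\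
    forall h1 h2 : C, Cmod h1 < delta -> Cmod h2 < delta ->
      Cmod (F (fst p + h1, snd p + h2)%C - F p - (a * h1 + b * h2))%C
        <= eps * (Cmod h1 + Cmod h2).

Definition holomorphic_on (U : C * C -> Prop) (f : C * C -> C * C) : Prop :=
  forall p, U p ->
    C2_differentiable_at (fun q => fst (f q)) p /\
    C2_differentiable_at (fun q => snd (f q)) p.

Definition biholomorphic (U V : C * C -> Prop) : Prop :=
  exists f g : C * C -> C * C,
    (forall p, U p -> V (f p)) /\
    (forall q, V q -> U (g q)) /\
    (forall p, U p -> g (f p) = p) /\
    (forall q, V q -> f (g q) = q) /\
    holomorphic_on U f /\ holomorphic_on V g.

(* The biholomorphism is F (z, w) = ((z + w) / (1 + z w), i (z - w) / (1 + z w)).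
   For (u, v) = F (z, w) one has u - i v = 2 z / (1 + z w), u + i v = 2 w / (1 + z w) and
   1 - u^2 - v^2 = ((1 - z w) / (1 + z w))^2, so F is inverted by
   G (u, v) = ((u - i v) / (1 + s), (u + i v) / (1 + s)) with s the principal square root
   of 1 - u^2 - v^2.  By the parallelogram law, F (z, w) lies in Omega_1 iff
   (1 - |z|^2) (1 - |w|^2) > 0.  On Omega_1 the triangle inequality keeps 1 - u^2 - v^2 off
   the cut (-oo, 0], so s is holomorphic there with Re s > 0; the product of the coordinates
   of G (u, v) is (1 - s) / (1 + s), of modulus < 1, and with the sign condition this puts
   both coordinates in the disc. *)

From Stdlib Require Import Reals Lra Psatz.
From Coquelicot Require Import Coquelicot.
Open Scope R_scope.

(* [C] as a normed module over itself; Coquelicot's [C_NormedModule] carries a different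
   uniform structure and does not unify with it. *)
Local Notation C_normed := (AbsRing_NormedModule C_AbsRing).

Lemma Cmod_re_bounds (t : C) : - Cmod t <= fst t <= Cmod t.
Proof. apply Rabs_le_between, re_le_Cmod. Qed.

(* The principal square root; on the cut [(-oo, 0]] it is [i sqrt |t|]. *)
Definition Csqrt (t : C) : C :=
  let r := Cmod t in
  (sqrt ((r + fst t) / 2),
   if Rlt_dec (snd t) 0 then - sqrt ((r - fst t) / 2) else sqrt ((r - fst t) / 2)).

Definition slit_plane (t : C) : Prop := snd t <> 0 \/ 0 < fst t.

Lemma Csqrt_sqr (t : C) : (Csqrt t * Csqrt t)%C = t.
Proof.
  destruct t as [x y]; unfold Csqrt; simpl fst; simpl snd.
  pose proof (Cmod2_alt (x, y)) as Hr2; pose proof (Cmod_re_bounds (x, y)) as Hrx.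
  cbn [Re Im fst snd] in *; set (r := Cmod (x, y)) in *.
  assert (Ha : sqrt ((r + x) / 2) ^ 2 = (r + x) / 2) by (apply pow2_sqrt; lra).
  assert (Hb : sqrt ((r - x) / 2) ^ 2 = (r - x) / 2) by (apply pow2_sqrt; lra).
  assert (Hab : sqrt ((r + x) / 2) * sqrt ((r - x) / 2) = Rabs y / 2).
  { rewrite <- sqrt_mult by lra.
    replace ((r + x) / 2 * ((r - x) / 2)) with (Rsqr (Rabs y / 2))
      by (unfold Rsqr; rewrite <- (pow2_abs y) in Hr2; nra).
    apply sqrt_Rsqr; pose proof (Rabs_pos y); lra. }
  unfold Cmult; simpl.
  destruct (Rlt_dec y 0); [rewrite Rabs_left in Hab by lra | rewrite Rabs_right in Hab by lra];
    f_equal; nra.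
Qed.

Lemma Csqrt_re_ge0 (t : C) : 0 <= fst (Csqrt t).
Proof. apply sqrt_pos. Qed.

Lemma Csqrt_re_gt0 (t : C) : slit_plane t -> 0 < fst (Csqrt t).
Proof.
  destruct t as [x y]; intros Ht; apply sqrt_lt_R0.
  pose proof (Cmod2_alt (x, y)); pose proof (Cmod_re_bounds (x, y)); pose proof (Cmod_ge_0 (x, y)).
  destruct Ht as [Hy | Hx]; cbn [Re Im fst snd] in *.
  - pose proof (Rsqr_pos_lt y Hy); unfold Rsqr in *; nra.
  - lra.
Qed.

Lemma Csqrt_unique (t s : C) : 0 < fst s -> (s * s)%C = t -> Csqrt t = s.
Proof.
  intros Hs Hst.
  assert (Hprod : ((Csqrt t - s) * (Csqrt t + s))%C = 0%C).
  { replace ((Csqrt t - s) * (Csqrt t + s))%C with (Csqrt t * Csqrt t - s * s)%C by ring.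
    rewrite Csqrt_sqr, Hst; ring. }
  assert (Hsum : (Csqrt t + s)%C <> 0%C).
  { intros E; apply (f_equal fst) in E; change (fst (Csqrt t) + fst s = 0) in E.
    pose proof (Csqrt_re_ge0 t); lra. }
  destruct (Ceq_dec (Csqrt t - s) 0) as [E | E].
  - replace (Csqrt t) with (Csqrt t - s + s)%C by ring; rewrite E; ring.
  - destruct (Cmult_neq_0 _ _ E Hsum Hprod).
Qed.

Lemma is_derive_of_quadratic_bound (phi : C -> C) (t L : C) (d K : R) :
  0 < d -> 0 <= K ->
  (forall h, Cmod h < d -> Cmod (phi (t + h) - phi t - h * L)%C <= K * Cmod h ^ 2) ->
  @is_derive C_AbsRing C_normed phi t L.
Proof.
  intros Hd HK Hrem; split; [apply is_linear_scal_l |].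
  intros x Hx; apply (@is_filter_lim_locally_unique C_AbsRing C_normed) in Hx; subst x.
  intros eps; apply (@locally_norm_le_locally C_AbsRing C_normed).
  assert (Hr : 0 < Rmin d (eps / (K + 1))).
  { apply Rmin_pos; [lra | apply Rdiv_lt_0_compat; [apply cond_pos | lra]]. }
  exists (mkposreal _ Hr); intros y Hy.
  change (Cmod (y - t)%C < Rmin d (eps / (K + 1))) in Hy.
  change (Cmod (phi y - phi t - (y - t) * L)%C <= eps * Cmod (y - t)%C).
  replace y with (t + (y - t))%C at 1 by ring.
  set (h := (y - t)%C) in *.
  pose proof (Rlt_le_trans _ _ _ Hy (Rmin_l _ _)) as Hhd.
  pose proof (Rlt_le_trans _ _ _ Hy (Rmin_r _ _)) as Hheps.
  apply Rlt_div_r in Hheps; [| lra].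
  pose proof (Cmod_ge_0 h).
  apply (Rle_trans _ _ _ (Hrem h Hhd)); nra.
Qed.

Lemma is_derive_Cinv (t : C) : t <> 0%C ->
  @is_derive C_AbsRing C_normed Cinv t (- / (t * t))%C.
Proof.
  intros Ht; pose proof (proj1 (Cmod_gt_0 t) Ht) as Hm.
  apply (is_derive_of_quadratic_bound _ _ _ (Cmod t / 2) (2 / Cmod t ^ 3)); [lra | |].
  { apply Rlt_le, Rdiv_lt_0_compat; [lra | apply pow_lt; lra]. }
  intros h Hh.
  assert (Hth : Cmod t / 2 <= Cmod (t + h)%C).
  { pose proof (Cmod_triangle (t + h)%C (- h)%C) as Htri.
    rewrite Cmod_opp in Htri; replace (t + h + - h)%C with t in Htri by ring; lra. }
  assert (Hth0 : (t + h)%C <> 0%C) by (apply Cmod_gt_0; lra).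
  replace (/ (t + h) - / t - h * - / (t * t))%C with (h * h / (t * t * (t + h)))%C
    by (field; auto).
  rewrite Cmod_div by (repeat apply Cmult_neq_0; auto).
  rewrite !Cmod_mult; apply Rle_div_l; [apply Rmult_lt_0_compat; nra |].
  replace (2 / Cmod t ^ 3 * Cmod h ^ 2 * (Cmod t * Cmod t * Cmod (t + h)%C))
    with (Cmod h ^ 2 * (2 * Cmod (t + h)%C / Cmod t)) by (field; lra).
  assert (1 <= 2 * Cmod (t + h)%C / Cmod t) by (apply Rle_div_r; lra).
  pose proof (Cmod_ge_0 h); nra.
Qed.

Lemma is_derive_Csqrt (t : C) : slit_plane t ->
  @is_derive C_AbsRing C_normed Csqrt t (/ (2 * Csqrt t))%C.
Proof.
  intros Ht; pose proof (Csqrt_re_gt0 t Ht) as Hb.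
  set (B := Csqrt t) in *; set (b := fst B) in *.
  assert (HB : (2 * B)%C <> 0%C).
  { intros E; apply (f_equal fst) in E; change (2 * b - 0 * snd B = 0) in E; lra. }
  assert (HbB : b <= Cmod B) by apply Cmod_re_bounds.
  apply (is_derive_of_quadratic_bound _ _ _ 1 (/ (2 * b ^ 3))); [lra | |].
  { apply Rlt_le, Rinv_0_lt_compat, Rmult_lt_0_compat; [lra | apply pow_lt; lra]. }
  intros h _; fold B; set (A := Csqrt (t + h)).
  (* With [h = (A - B) (A + B)] and [Re (A + B) >= b], the remainder [- (A - B)^2 / (2 B)]
     is at most [|h|^2 / (2 b^3)]. *)
  assert (HbAB : b <= Cmod (A + B)%C).
  { pose proof (Csqrt_re_ge0 (t + h)) as HA; pose proof (Cmod_re_bounds (A + B)%C) as HAB.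
    change (fst (A + B)%C) with (fst A + b) in HAB; fold A in HA; lra. }
  assert (Eh : h = ((A - B) * (A + B))%C).
  { replace ((A - B) * (A + B))%C with (A * A - B * B)%C by ring.
    unfold A, B; rewrite !Csqrt_sqr; ring. }
  replace (A - B - h * / (2 * B))%C with (- ((A - B) * (A - B)) / (2 * B))%C
    by (rewrite Eh; field; intros E; apply HB; rewrite E; ring).
  assert (HAB : Cmod (A - B)%C * b <= Cmod h).
  { rewrite Eh, Cmod_mult; apply Rmult_le_compat_l; [apply Cmod_ge_0 | lra]. }
  rewrite Cmod_div, Cmod_opp, !Cmod_mult, Cmod_R, Rabs_pos_eq by (auto; lra).
  apply Rle_div_l; [lra |].
  replace (/ (2 * b ^ 3) * Cmod h ^ 2 * (2 * Cmod B)) with ((Cmod h / b) ^ 2 * (Cmod B / b))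
    by (field; lra).
  assert (Cmod (A - B)%C <= Cmod h / b) by (apply Rle_div_r; lra).
  assert (1 <= Cmod B / b) by (apply Rle_div_r; lra).
  assert (Cmod (A - B)%C * Cmod (A - B)%C <= (Cmod h / b) ^ 2)
    by (pose proof (Cmod_ge_0 (A - B)%C); nra).
  pose proof (pow2_ge_0 (Cmod h / b)); nra.
Qed.

Local Notation C2_normed := (prod_NormedModule C_AbsRing C_normed C_normed).

Definition ex_filterdiff_C2 (F : C * C -> C) (p : C * C) : Prop :=
  exists l : C2_normed -> C_normed,
    @filterdiff C_AbsRing C2_normed C_normed F (locally (p : C2_normed)) l.

Lemma ex_filterdiff_C2_fst p : ex_filterdiff_C2 (fun q => fst q) p.
Proof. exists (fun q : C2_normed => fst q); apply filterdiff_linear, is_linear_fst. Qed.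

Lemma ex_filterdiff_C2_snd p : ex_filterdiff_C2 (fun q => snd q) p.
Proof. exists (fun q : C2_normed => snd q); apply filterdiff_linear, is_linear_snd. Qed.

Lemma ex_filterdiff_C2_const (c : C) p : ex_filterdiff_C2 (fun _ => c) p.
Proof.
  exists (fun _ : C2_normed => (zero : C_normed)).
  apply (@filterdiff_const C_AbsRing C2_normed C_normed), locally_filter.
Qed.

Lemma ex_filterdiff_C2_plus F G p :
  ex_filterdiff_C2 F p -> ex_filterdiff_C2 G p -> ex_filterdiff_C2 (fun q => F q + G q)%C p.
Proof. intros [lf Hf] [lg Hg]; eexists; exact (filterdiff_plus_fct _ _ _ _ Hf Hg). Qed.

Lemma ex_filterdiff_C2_minus F G p :
  ex_filterdiff_C2 F p -> ex_filterdiff_C2 G p -> ex_filterdiff_C2 (fun q => F q - G q)%C p.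
Proof. intros [lf Hf] [lg Hg]; eexists; exact (filterdiff_minus_fct _ _ _ _ Hf Hg). Qed.

Lemma ex_filterdiff_C2_mult F G p :
  ex_filterdiff_C2 F p -> ex_filterdiff_C2 G p -> ex_filterdiff_C2 (fun q => F q * G q)%C p.
Proof.
  intros [lf Hf] [lg Hg]; eexists.
  exact (@filterdiff_mult_fct C_AbsRing C2_normed F G p lf lg Cmult_comm Hf Hg).
Qed.

Lemma ex_filterdiff_C2_comp (phi : C -> C) (L : C) F p :
  @is_derive C_AbsRing C_normed phi (F p) L ->
  ex_filterdiff_C2 F p -> ex_filterdiff_C2 (fun q => phi (F q)) p.
Proof.
  intros Hphi [lf Hf]; eexists.
  exact (@filterdiff_comp' C_AbsRing C2_normed C_normed C_normed F phi p lf _ Hf Hphi).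
Qed.

Local Hint Resolve ex_filterdiff_C2_fst ex_filterdiff_C2_snd ex_filterdiff_C2_const
  ex_filterdiff_C2_plus ex_filterdiff_C2_minus ex_filterdiff_C2_mult : filterdiff_C2.

Lemma norm_C2_le (h1 h2 : C) : norm (@pair C C h1 h2 : C2_normed) <= Cmod h1 + Cmod h2.
Proof.
  change (sqrt (Cmod h1 ^ 2 + Cmod h2 ^ 2) <= Cmod h1 + Cmod h2).
  pose proof (Cmod_ge_0 h1); pose proof (Cmod_ge_0 h2).
  rewrite <- (sqrt_pow2 (Cmod h1 + Cmod h2)) by lra.
  apply sqrt_le_1_alt; nra.
Qed.

Lemma C2_differentiable_at_of_filterdiff F p :
  ex_filterdiff_C2 F p -> C2_differentiable_at F p.
Proof.
  intros [l [Hlin Hdom]].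
  set (e1 := @pair C C 1 0 : C2_normed); set (e2 := @pair C C 0 1 : C2_normed).
  assert (Hl : forall h1 h2 : C, l (@pair C C h1 h2 : C2_normed) = (h1 * l e1 + h2 * l e2)%C).
  { intros h1 h2.
    replace (@pair C C h1 h2 : C2_normed) with (plus (scal h1 e1) (scal h2 e2)).
    - rewrite (linear_plus _ Hlin), !(linear_scal _ Hlin); reflexivity.
    - apply injective_projections;
        [change (h1 * 1 + h2 * 0 = h1)%C | change (h1 * 0 + h2 * 1 = h2)%C]; ring. }
  exists (l e1), (l e2); intros eps Heps.
  assert (Hp : is_filter_lim (locally (p : C2_normed)) p) by (intros P HP; exact HP).
  destruct (locally_norm_le_locally _ _ (Hdom p Hp (mkposreal eps Heps))) as [delta Hdelta].
  exists (delta / 2); split; [pose proof (cond_pos delta); lra |].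
  intros h1 h2 Hh1 Hh2; destruct p as [p1 p2]; cbn [fst snd].
  assert (Hstep : minus (@pair C C (p1 + h1)%C (p2 + h2)%C : C2_normed) (@pair C C p1 p2)
                 = @pair C C h1 h2).
  { apply injective_projections;
      [change (p1 + h1 + - p1 = h1)%C | change (p2 + h2 + - p2 = h2)%C]; ring. }
  pose proof (norm_C2_le h1 h2) as Hn.
  specialize (Hdelta (@pair C C (p1 + h1)%C (p2 + h2)%C)); unfold ball_norm in Hdelta.
  rewrite Hstep, Hl in Hdelta; simpl in Hdelta.
  replace (l e1 * h1 + l e2 * h2)%C with (h1 * l e1 + h2 * l e2)%C by ring.
  apply (Rle_trans _ _ _ (Hdelta ltac:(lra))), Rmult_le_compat_l; lra.
Qed.

Lemma Ci_sqr : (Ci * Ci = - (1))%C.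
Proof. apply injective_projections; simpl; ring. Qed.

Lemma Cmod_parallelogram (a b : C) :
  Cmod (a + b)%C ^ 2 + Cmod (a - b)%C ^ 2 = 2 * (Cmod a ^ 2 + Cmod b ^ 2).
Proof. rewrite !Cmod2_alt; destruct a, b; simpl; ring. Qed.

Definition to_Omega1 (q : C * C) : C * C :=
  ((fst q + snd q) / (1 + fst q * snd q), Ci * (fst q - snd q) / (1 + fst q * snd q))%C.

Lemma Omega1_to_Omega1_iff (z w : C) : (1 + z * w)%C <> 0%C ->
  (Omega1 (to_Omega1 (z, w)) <-> 0 < (1 - Cmod z ^ 2) * (1 - Cmod w ^ 2)).
Proof.
  intros Hd; unfold Omega1, to_Omega1; cbn [fst snd].
  pose proof (Cmod_parallelogram z w) as Hzw; pose proof (Cmod_parallelogram 1 (z * w)) as H1zw.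
  rewrite Cmod_1, Cmod_mult in H1zw.
  set (d := (1 + z * w)%C) in *.
  assert (Hsum : ((z + w) / d * ((z + w) / d) + Ci * (z - w) / d * (Ci * (z - w) / d) - 1)%C
                 = (- ((1 - z * w) * (1 - z * w)) / (d * d))%C).
  { replace (Ci * (z - w) / d * (Ci * (z - w) / d))%C
      with (Ci * Ci * ((z - w) * (z - w)) / (d * d))%C by (field; auto).
    rewrite Ci_sqr; unfold d; field; auto. }
  rewrite Hsum, !Cmod_mult, !Cmod_div, Cmod_opp, !Cmod_mult, Cmod_Ci by (auto using Cmult_neq_0).
  assert (HD : 0 < Cmod d) by (apply Cmod_gt_0; auto).
  assert (HD2 : 0 < Cmod d ^ 2) by (apply pow_lt; lra).
  replace (Cmod (z + w)%C / Cmod d * (Cmod (z + w)%C / Cmod d)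
           + 1 * Cmod (z - w)%C / Cmod d * (1 * Cmod (z - w)%C / Cmod d) - 1)
    with ((Cmod (z + w)%C ^ 2 + Cmod (z - w)%C ^ 2 - Cmod d ^ 2) / Cmod d ^ 2) by (field; lra).
  replace (Cmod (1 - z * w)%C * Cmod (1 - z * w)%C / (Cmod d * Cmod d))
    with (Cmod (1 - z * w)%C ^ 2 / Cmod d ^ 2) by (field; lra).
  rewrite Rlt_div_l by lra; unfold Rdiv; rewrite Rmult_assoc, Rinv_l, Rmult_1_r by lra.
  split; intros; nra.
Qed.

Lemma slit_plane_of_Omega1 (q : C * C) : Omega1 q ->
  slit_plane (1 - fst q * fst q - snd q * snd q)%C.
Proof.
  destruct q as [u v]; unfold Omega1; cbn [fst snd]; intros H.
  pose proof (Cmod_triangle (u * u) (v * v)) as Htri.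
  set (t := (1 - u * u - v * v)%C) in *.
  replace (u * u + v * v - 1)%C with (- t)%C in H by (unfold t; ring).
  replace (u * u + v * v)%C with (1 - t)%C in Htri by (unfold t; ring).
  clearbody t; rewrite Cmod_opp in H.
  destruct (Req_dec (snd t) 0) as [Hy | Hy]; [right | left; exact Hy].
  apply Rnot_le_lt; intros Hx.
  pose proof (Cmod_re_bounds (1 - t)%C) as Hre; pose proof (Cmod2_alt t) as Ht2.
  pose proof (Cmod_ge_0 t); destruct t as [x y]; cbn [Re Im fst snd] in *; subst y.
  change (fst (1 - (x, 0))%C) with (1 + - x) in Hre.
  assert (Cmod (x, 0) <= - x) by nra.
  lra.
Qed.

Lemma one_add_neq0_of_Cmod_lt1 (m : C) : Cmod m < 1 -> (1 + m)%C <> 0%C.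
Proof.
  intros Hm E; apply (f_equal fst) in E; change (1 + fst m = 0) in E.
  pose proof (Cmod_re_bounds m); lra.
Qed.

Lemma Cmod_mult_lt1 (z w : C) : Cmod z < 1 -> Cmod w < 1 -> Cmod (z * w)%C < 1.
Proof. rewrite Cmod_mult; pose proof (Cmod_ge_0 z); pose proof (Cmod_ge_0 w); nra. Qed.

Lemma Cayley_re_gt0 (m : C) : Cmod m < 1 -> 0 < fst ((1 - m) / (1 + m))%C.
Proof.
  intros Hm; pose proof (Cmod2_alt m); pose proof (Cmod_ge_0 m).
  destruct m as [a b]; cbn [Re Im fst snd] in *.
  assert (a ^ 2 + b ^ 2 < 1) by nra.
  unfold Cdiv, Cmult, Cinv; simpl.
  field_simplify; [apply Rdiv_lt_0_compat; nra | nra].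
Qed.

Lemma Cmod_1_sub_lt_1_add (s : C) : 0 < fst s -> Cmod (1 - s)%C < Cmod (1 + s)%C.
Proof.
  intros Hs; pose proof (Cmod2_alt (1 - s)%C); pose proof (Cmod2_alt (1 + s)%C).
  pose proof (Cmod_ge_0 (1 - s)%C); pose proof (Cmod_ge_0 (1 + s)%C).
  destruct s as [x y]; simpl in *; nra.
Qed.

Lemma lt1_of_prod_pos (a b : R) : 0 <= a -> 0 <= b -> a * b < 1 ->
  0 < (1 - a ^ 2) * (1 - b ^ 2) -> a < 1 /\ b < 1.
Proof.
  intros Ha Hb Hab Hprod.
  assert (Hsign : forall x y, 0 <= x -> 0 <= y -> x * y < 1 ->
            0 < (1 - x ^ 2) * (1 - y ^ 2) -> x < 1).
  { intros x y Hx Hy Hxy Hp; apply Rnot_le_lt; intros Hx1.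
    assert (Hy1 : 1 < y).
    { apply Rnot_le_lt; intros Hy1.
      assert (0 <= 1 - y ^ 2) by nra. assert (1 - x ^ 2 <= 0) by nra. nra. }
    nra. }
  split; [exact (Hsign a b Ha Hb Hab Hprod) |].
  rewrite Rmult_comm in Hab, Hprod; exact (Hsign b a Hb Ha Hab Hprod).
Qed.

(* On the image of [to_Omega1] this is the Cayley transform [(1 - z w) / (1 + z w)]. *)
Definition cayley_root (q : C * C) : C := Csqrt (1 - fst q * fst q - snd q * snd q)%C.

Definition to_bidisc (q : C * C) : C * C :=
  ((fst q - Ci * snd q) / (1 + cayley_root q), (fst q + Ci * snd q) / (1 + cayley_root q))%C.

Lemma one_add_Csqrt_neq0 (t : C) : (1 + Csqrt t)%C <> 0%C.
Proof.
  intros E; apply (f_equal fst) in E; change (1 + fst (Csqrt t) = 0) in E.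
  pose proof (Csqrt_re_ge0 t); lra.
Qed.

Lemma two_neq0 : RtoC 2 <> 0%C.
Proof. intros E; apply (f_equal fst) in E; simpl in E; lra. Qed.

Lemma to_bidisc_mult (q : C * C) :
  (fst (to_bidisc q) * snd (to_bidisc q))%C
  = ((1 - cayley_root q) / (1 + cayley_root q))%C.
Proof.
  destruct q as [u v]; unfold to_bidisc, cayley_root; cbn [fst snd].
  pose proof (one_add_Csqrt_neq0 (1 - u * u - v * v)) as Hs1.
  pose proof (Csqrt_sqr (1 - u * u - v * v)) as Hs2.
  set (s := Csqrt _) in *.
  replace ((u - Ci * v) / (1 + s) * ((u + Ci * v) / (1 + s)))%C
    with ((u * u - Ci * Ci * (v * v)) / ((1 + s) * (1 + s)))%C by (field; auto).
  rewrite Ci_sqr; replace (u * u - - (1) * (v * v))%C with (1 - s * s)%C by (rewrite Hs2; ring).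
  field; auto.
Qed.

Lemma to_Omega1_to_bidisc (q : C * C) : to_Omega1 (to_bidisc q) = q.
Proof.
  unfold to_Omega1; rewrite to_bidisc_mult.
  pose proof (one_add_Csqrt_neq0 (1 - fst q * fst q - snd q * snd q)) as Hs1.
  destruct q as [u v]; unfold to_bidisc, cayley_root in *; cbn [fst snd] in *.
  set (s := Csqrt _) in *.
  replace (1 + (1 - s) / (1 + s))%C with (2 / (1 + s))%C by (field; auto).
  pose proof two_neq0.
  apply injective_projections; cbn [fst snd].
  - field; auto.
  - replace (Ci * ((u - Ci * v) / (1 + s) - (u + Ci * v) / (1 + s)) / (2 / (1 + s)))%C
      with (- (Ci * Ci) * v)%C by (field; auto).
    rewrite Ci_sqr; ring.
Qed.

Lemma cayley_root_to_Omega1 (z w : C) : Cmod (z * w)%C < 1 ->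
  cayley_root (to_Omega1 (z, w)) = ((1 - z * w) / (1 + z * w))%C.
Proof.
  intros Hzw; pose proof (one_add_neq0_of_Cmod_lt1 _ Hzw) as Hd.
  apply Csqrt_unique; [exact (Cayley_re_gt0 _ Hzw) |].
  unfold to_Omega1; cbn [fst snd].
  replace (Ci * (z - w) / (1 + z * w) * (Ci * (z - w) / (1 + z * w)))%C
    with (Ci * Ci * ((z - w) * (z - w)) / ((1 + z * w) * (1 + z * w)))%C by (field; auto).
  rewrite Ci_sqr; field; auto.
Qed.

Lemma to_bidisc_to_Omega1 (q : C * C) : bidisc q -> to_bidisc (to_Omega1 q) = q.
Proof.
  destruct q as [z w]; intros [Hz Hw]; cbn [fst snd] in Hz, Hw.
  pose proof (Cmod_mult_lt1 _ _ Hz Hw) as Hzw; pose proof (one_add_neq0_of_Cmod_lt1 _ Hzw) as Hd.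
  unfold to_bidisc; rewrite (cayley_root_to_Omega1 _ _ Hzw).
  unfold to_Omega1; cbn [fst snd].
  replace (1 + (1 - z * w) / (1 + z * w))%C with (2 / (1 + z * w))%C by (field; auto).
  replace (Ci * (Ci * (z - w) / (1 + z * w)))%C with (Ci * Ci * (z - w) / (1 + z * w))%C
    by (field; auto).
  rewrite Ci_sqr; pose proof two_neq0.
  apply injective_projections; cbn [fst snd]; field; auto.
Qed.

Lemma to_Omega1_maps_to (q : C * C) : bidisc q -> Omega1 (to_Omega1 q).
Proof.
  destruct q as [z w]; intros [Hz Hw]; cbn [fst snd] in Hz, Hw; unfold unit_disc in *.
  apply Omega1_to_Omega1_iff.
  - exact (one_add_neq0_of_Cmod_lt1 _ (Cmod_mult_lt1 _ _ Hz Hw)).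
  - pose proof (Cmod_ge_0 z); pose proof (Cmod_ge_0 w); apply Rmult_lt_0_compat; nra.
Qed.

Lemma to_bidisc_maps_to (q : C * C) : Omega1 q -> bidisc (to_bidisc q).
Proof.
  intros Hq.
  assert (Hs : 0 < fst (cayley_root q)) by exact (Csqrt_re_gt0 _ (slit_plane_of_Omega1 q Hq)).
  assert (Hzw : Cmod (fst (to_bidisc q) * snd (to_bidisc q))%C < 1).
  { rewrite to_bidisc_mult, Cmod_div by apply one_add_Csqrt_neq0.
    pose proof (Cmod_1_sub_lt_1_add _ Hs).
    apply Rlt_div_l; [apply Cmod_gt_0, one_add_Csqrt_neq0 | lra]. }
  rewrite <- (to_Omega1_to_bidisc q) in Hq.
  destruct (to_bidisc q) as [z w]; cbn [fst snd] in Hzw.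
  apply (Omega1_to_Omega1_iff z w (one_add_neq0_of_Cmod_lt1 _ Hzw)) in Hq.
  rewrite Cmod_mult in Hzw.
  exact (lt1_of_prod_pos _ _ (Cmod_ge_0 z) (Cmod_ge_0 w) Hzw Hq).
Qed.

Lemma to_Omega1_holomorphic : holomorphic_on bidisc to_Omega1.
Proof.
  intros [z w] [Hz Hw]; cbn [fst snd] in Hz, Hw.
  assert (Hinv : ex_filterdiff_C2 (fun q => / (1 + fst q * snd q))%C (z, w)).
  { eapply (ex_filterdiff_C2_comp Cinv _ (fun q => 1 + fst q * snd q)%C);
      auto with filterdiff_C2.
    exact (is_derive_Cinv _ (one_add_neq0_of_Cmod_lt1 _ (Cmod_mult_lt1 _ _ Hz Hw))). }
  split; apply C2_differentiable_at_of_filterdiff.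
  - refine (ex_filterdiff_C2_mult (fun q => fst q + snd q)%C _ _ _ Hinv); auto with filterdiff_C2.
  - refine (ex_filterdiff_C2_mult (fun q => Ci * (fst q - snd q))%C _ _ _ Hinv);
      auto with filterdiff_C2.
Qed.

Lemma to_bidisc_holomorphic : holomorphic_on Omega1 to_bidisc.
Proof.
  intros p Hp.
  assert (Hroot : ex_filterdiff_C2 cayley_root p).
  { eapply (ex_filterdiff_C2_comp Csqrt _ (fun q => 1 - fst q * fst q - snd q * snd q)%C);
      auto with filterdiff_C2.
    exact (is_derive_Csqrt _ (slit_plane_of_Omega1 p Hp)). }
  assert (Hinv : ex_filterdiff_C2 (fun q => / (1 + cayley_root q))%C p).
  { eapply (ex_filterdiff_C2_comp Cinv _ (fun q => 1 + cayley_root q)%C);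
      auto with filterdiff_C2.
    exact (is_derive_Cinv _ (one_add_Csqrt_neq0 _)). }
  split; apply C2_differentiable_at_of_filterdiff.
  - refine (ex_filterdiff_C2_mult (fun q => fst q - Ci * snd q)%C _ _ _ Hinv);
      auto with filterdiff_C2.
  - refine (ex_filterdiff_C2_mult (fun q => fst q + Ci * snd q)%C _ _ _ Hinv);
      auto with filterdiff_C2.
Qed.

Theorem theorem4p6 : biholomorphic bidisc Omega1.
Proof.
  exists to_Omega1, to_bidisc.
  split; [exact to_Omega1_maps_to |].
  split; [exact to_bidisc_maps_to |].
  split; [exact to_bidisc_to_Omega1 |].
  split; [intros q _; exact (to_Omega1_to_bidisc q) |].
  split; [exact to_Omega1_holomorphic | exact to_bidisc_holomorphic].
Qed.
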